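(* Let $(A_n(x))_{n\ge0}$ be the Appell sequence of a complex sequence $(\alpha_n)_{n\ge0}$. The following are equivalent: (i) (R): $A_n(1-x)=(-1)^nA_n(x)$ for all $n\ge0$; (ii) $A_n(1)=(-1)^n\alpha_n$ for all $n\ge0$; (iii) $A_n(\tfrac12)=0$ for all odd $n\ge1$. Moreover, (R) is equivalent to: $A^\star_n(1)=(-1)^n\alpha_n$ for all $n\ge0$ together with $A^\star_n(2)=0$ for all odd $n\ge1$. Finally, (R) implies $\alpha_1=-\tfrac12\alpha_0$.
   Context: Let $(\alpha_n)_{n\ge0}$ be an arbitrary sequence of complex numbers (no assumption $\alpha_0\ne0$). Its Appell polynomials are $A_n(x)=\sum_{\nu=0}^{n}\binom{n}{\nu}\alpha_{n-\nu}x^\nu$ for $n\ge0$, equivalently $\big(\sum_{n\ge0}\alpha_n t^n/n!\big)e^{xt}=\sum_{n\ge0}A_n(x)t^n/n!$. The reciprocal Appell polynomials are $A^\star_n(x)=x^nA_n(x^{-1})=\sum_{\nu=0}^{n}\binom{n}{\nu}\alpha_\nu x^\nu$. *)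

From HB Require Import structures.
From mathcomp Require Import all_boot all_order all_algebra.
From mathcomp Require Import complex reals.
Set Implicit Arguments. Unset Strict Implicit. Unset Printing Implicit Defensive.
Import Order.TTheory GRing.Theory Num.Theory.
Local Open Scope ring_scope.

Definition appell {C : pzRingType} (alpha : nat -> C) (n : nat) (x : C) : C :=
  \sum_(0 <= nu < n.+1) 'C(n, nu)%:R * alpha (n - nu)%N * x ^+ nu.

Definition appell_star {C : pzRingType} (alpha : nat -> C) (n : nat) (x : C) : C :=
  \sum_(0 <= nu < n.+1) 'C(n, nu)%:R * alpha nu * x ^+ nu.

From HB Require Import structures.
From mathcomp Require Import all_boot all_order all_algebra.
From mathcomp Require Import complex reals.
From mathcomp Require Import ring.
Import Order.TTheory GRing.Theory Num.Theory.

(* The proof rests on the binomial translation formula of Appell sequences,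
     A_n(y + z) = sum_i C(n,i) A_(n-i)(y) z^i,
   valid over any commutative ring.  Expanding A_n(1 - x) around 1 shows that
   the reflection property (R) holds iff A_n(1) = (-1)^n alpha_n, and expanding
   around 1/2 (in a field where 2 is invertible) shows that (R) holds iff
   A_n(1/2) vanishes for odd n, because (R) at x = 1/2 reads A_n(1/2) =
   -A_n(1/2) for odd n.  The reciprocal polynomials satisfy A*_n(1) = A_n(1)
   and A*_n(2) = 2^n A_n(1/2), which turns the previous two characterisations
   into the one for A*. *)

Lemma ffactD n m i : n ^_ (m + i) = n ^_ m * (n - m) ^_ i.
Proof.
elim: i => [|i IHi]; first by rewrite addn0 ffactn0 muln1.
by rewrite addnS !ffactnSr IHi subnDA mulnA.
Qed.

(* Choosing m then i elements among n is the same as choosing i then m; the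
   identity holds for all m, i since both sides vanish when m + i > n. *)
Lemma bin_swap n m i : 'C(n, m) * 'C(n - m, i) = 'C(n, i) * 'C(n - i, m).
Proof.
have ffact_form k l : 'C(n, k) * 'C(n - k, l) * (k`! * l`!) = n ^_ (k + l).
  by rewrite mulnACA !bin_ffact ffactD.
have fact_pos : 0 < m`! * i`! by rewrite muln_gt0 !fact_gt0.
apply/eqP; rewrite -(eqn_pmul2r fact_pos) ffact_form.
by rewrite [m`! * _]mulnC ffact_form addnC.
Qed.

Local Open Scope ring_scope.

Section AppellRing.

Context {C : comPzRingType} (a : nat -> C).

Lemma sum_bin_widen k N (F : nat -> C) : (k <= N)%N ->
  \sum_(j < k.+1) 'C(k, j)%:R * F j = \sum_(j < N.+1) 'C(k, j)%:R * F j.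
Proof.
move=> le_kN; rewrite (big_ord_widen N.+1 (fun j => 'C(k, j)%:R * F j)) //.
rewrite big_mkcond; apply: eq_bigr => j _.
by case: ltnP => // lt_kj; rewrite bin_small // mul0r.
Qed.

Lemma appell_wide {n N : nat} (le_nN : (n <= N)%N) (x : C) :
  appell a n x = \sum_(m < N.+1) 'C(n, m)%:R * (a m * x ^+ (n - m)).
Proof.
rewrite -(@sum_bin_widen _ _ (fun m => a m * x ^+ (n - m))) //.
rewrite /appell big_nat_rev /= big_mkord.
apply: eq_bigr => m _; have le_mn : (m <= n)%N := ltnSE (ltn_ord m).
by rewrite add0n subSS bin_sub // subKn // mulrA.
Qed.

Lemma appell0 n : appell a n 0 = a n.
Proof.
rewrite /appell big_nat_recl // big1 ?addr0 => [|i _]; last first.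
  by rewrite expr0n mulr0.
by rewrite bin0 subn0 expr0 !mul1r mulr1.
Qed.

Lemma appell_translate n y z :
  appell a n (y + z) = \sum_(i < n.+1) 'C(n, i)%:R * appell a (n - i) y * z ^+ i.
Proof.
have binom m : (y + z) ^+ (n - m) =
    \sum_(i < n.+1) 'C(n - m, i)%:R * (y ^+ (n - m - i) * z ^+ i).
  rewrite -(@sum_bin_widen _ _ (fun i => y ^+ (n - m - i) * z ^+ i)) ?leq_subr //.
  by rewrite exprDn; apply: eq_bigr => i _; rewrite mulr_natl.
rewrite (appell_wide (leqnn n)).
under eq_bigr => m _ do rewrite binom !mulr_sumr.
rewrite exchange_big /=; apply: eq_bigr => i _.
rewrite (appell_wide (leq_subr i n)) mulr_sumr mulr_suml; apply: eq_bigr => m _.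
have := congr1 (GRing.natmul (1 : C)) (bin_swap n m i); rewrite !natrM => swap.
rewrite (subnAC n m i); transitivity
  (('C(n, m)%:R * 'C(n - m, i)%:R) * (a m * y ^+ (n - i - m)) * z ^+ i : C).
  by ring.
by rewrite swap; ring.
Qed.

Lemma appell_star1 n : appell_star a n 1 = appell a n 1.
Proof.
rewrite (appell_wide (leqnn n)) /appell_star big_mkord.
by apply: eq_bigr => i _; rewrite !expr1n mulrA.
Qed.

Definition appell_reflection : Prop :=
  forall n x, appell a n (1 - x) = (-1) ^+ n * appell a n x.

Lemma expr_split (x : C) {n i : nat} : (i <= n)%N -> x ^+ n = x ^+ (n - i) * x ^+ i.
Proof. by move=> le_in; rewrite -exprD subnK. Qed.

Lemma reflection_at1 :
  appell_reflection <-> forall n, appell a n 1 = (-1) ^+ n * a n.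
Proof.
split=> [refl n | at1 n x]; first by rewrite -appell0 -refl subr0.
rewrite appell_translate; under eq_bigr do rewrite at1.
rewrite /appell big_mkord mulr_sumr; apply: eq_bigr => i _.
by rewrite (exprNn x) (expr_split (-1) (ltnSE (ltn_ord i))); ring.
Qed.

End AppellRing.

Section AppellField.

Variables (F : fieldType) (a : nat -> F).
Hypothesis two_neq0 : 2%:R != 0 :> F.

Let half : F := 2%:R^-1.

Lemma one_sub_half : 1 - half = half.
Proof. by rewrite /half; field. Qed.

Lemma reflection_at_half :
  appell_reflection a <-> forall n, odd n -> appell a n half = 0.
Proof.
split=> [refl n odd_n | vanish n x].
  have := refl n half; rewrite one_sub_half -signr_odd odd_n expr1 mulN1r.
  move/eqP; rewrite -subr_eq0 opprK -mulr2n -mulr_natr mulf_eq0.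
  by rewrite (negbTE two_neq0) orbF => /eqP.
have -> : 1 - x = half + - (x - half) by rewrite /half; field.
have {2}-> : x = half + (x - half) by ring.
rewrite !appell_translate mulr_sumr; apply: eq_bigr => i _.
have le_in := ltnSE (ltn_ord i).
case odd_ni : (odd (n - i)); first by rewrite vanish // !(mulr0, mul0r).
rewrite (exprNn (x - half)) (expr_split (-1) le_in).
by rewrite -(signr_odd _ (n - i)) odd_ni expr0 mul1r; ring.
Qed.

Lemma appell_star2 n : appell_star a n 2%:R = 2%:R ^+ n * appell a n half.
Proof.
rewrite (appell_wide a (leqnn n)) /appell_star big_mkord mulr_sumr.
apply: eq_bigr => i _; have le_in := ltnSE (ltn_ord i).
have pow2_neq0 : 2%:R ^+ (n - i) != 0 :> F by rewrite expf_neq0.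
by rewrite (expr_split 2%:R le_in) /half exprVn; field.
Qed.

Lemma reflection_star :
  appell_reflection a <->
  (forall n, appell_star a n 1 = (-1) ^+ n * a n) /\
  (forall n, odd n -> appell_star a n 2%:R = 0).
Proof.
split=> [refl | [at1 _]]; last by apply/reflection_at1 => n; rewrite -appell_star1.
split=> [n | n odd_n].
  by rewrite appell_star1; apply: (proj1 (reflection_at1 a)).
by rewrite appell_star2 (proj1 reflection_at_half refl) ?mulr0.
Qed.

Lemma reflection_alpha1 : appell_reflection a -> a 1 = - (half * a 0).
Proof.
move=> /reflection_at1 /(_ 1); rewrite /appell !big_nat_recl // big_geq //=.
rewrite bin0 binn subn0 subnn !expr1n !mulr1 !mul1r addr0 expr1 mulN1r.
move=> at1; have -> : a 0 = - (a 1 *+ 2).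
  by rewrite -[a 0](addKr (a 1)) at1 -opprD mulr2n.
by rewrite /half; field.
Qed.

End AppellField.

Local Open Scope complex_scope.

Theorem mainTheorem1 (R : realType) (alpha : nat -> R[i]) :
  let A := appell alpha in
  let Astar := appell_star alpha in
  let PR := forall (n : nat) (x : R[i]), A n (1 - x) = (-1) ^+ n * A n x in
  [/\ PR <-> (forall n : nat, A n 1 = (-1) ^+ n * alpha n),
      PR <-> (forall n : nat, odd n -> A n (2%:R^-1) = 0),
      PR <-> ((forall n : nat, Astar n 1 = (-1) ^+ n * alpha n) /\
              (forall n : nat, odd n -> Astar n 2%:R = 0))
    & PR -> alpha 1%N = - (2%:R^-1 * alpha 0%N)].
Proof.
have two_neq0 : 2%:R != 0 :> R[i] by rewrite pnatr_eq0.
split.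
- exact: reflection_at1.
- exact: reflection_at_half.
- exact: reflection_star.
- exact: reflection_alpha1.
Qed.
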